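(* There exist large sets with multiplicity LS$(4,5,11;2)$, LS$(3,4,10;2)$, and LS$(5,6,12;2)$.
   Context: A Steiner system S$(t,k,n)$ is a pair $(Q,B)$ where $Q$ is an $n$-set and $B$ is a collection of $k$-subsets (blocks) of $Q$ such that every $t$-subset of $Q$ is contained in exactly one block. A large set with multiplicity $\mu$, LS$(t,k,n;\mu)$, is a family (the same system may occur more than once) of Steiner systems S$(t,k,n)$ on a common $n$-set $Q$ such that every $k$-subset of $Q$ is a block of exactly $\mu$ of the systems. *)

From mathcomp Require Import all_boot.
Set Implicit Arguments. Unset Strict Implicit. Unset Printing Implicit Defensive.

Definition steiner_system (t k n : nat) (B : {set {set 'I_n}}) : Prop :=
  (forall b, b \in B -> #|b| = k) /\
  (forall T : {set 'I_n}, #|T| = t -> #|[set b in B | T \subset b]| = 1).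

(* A large set with multiplicity mu, LS(t,k,n;mu): a family (list, so
   repetitions are allowed) of Steiner systems S(t,k,n) on the common n-set
   'I_n such that every k-subset of 'I_n is a block of exactly mu of them
   (counted with multiplicity). *)
Definition large_set_mult (t k n mu : nat) (L : seq {set {set 'I_n}}) : Prop :=
  (forall B, B \in L -> steiner_system t k B) /\
  (forall K : {set 'I_n}, #|K| = k -> count (fun B : {set {set 'I_n}} => K \in B) L = mu).

From mathcomp Require Import all_boot.
Set Implicit Arguments. Unset Strict Implicit. Unset Printing Implicit Defensive.

(* Every member of the large set LS(5,6,12;2) below is a relabelled copy of
   the Witt design S(5,6,12), the PSL(2,11)-orbit of {oo,1,3,4,5,9} on the
   projective line over F_11; that fourteen such copies cover every 6-subset
   exactly twice is checked by evaluation.  Taking the blocks through a fixed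
   point and deleting that point (the derived design) turns an
   LS(t+1,k+1,n+1;mu) into an LS(t,k,n;mu), which yields LS(4,5,11;2) and
   LS(3,4,10;2). *)

Section DerivedDesign.
Variable n : nat.

Definition add_max (T : {set 'I_n}) : {set 'I_n.+1} := ord_max |: lift ord_max @: T.
Definition drop_max (b : {set 'I_n.+1}) : {set 'I_n} := lift ord_max @^-1: b.
Definition derived (B : {set {set 'I_n.+1}}) : {set {set 'I_n}} := add_max @^-1: B.

Lemma mem_lift_add_max (i : 'I_n) (T : {set 'I_n}) :
  (lift ord_max i \in add_max T) = (i \in T).
Proof. by rewrite in_setU1 eq_sym (negPf (neq_lift _ _)) mem_imset //; apply: lift_inj. Qed.

Lemma add_maxK : cancel add_max drop_max.
Proof. by move=> T; apply/setP => i; rewrite inE mem_lift_add_max. Qed.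

Lemma drop_maxK (b : {set 'I_n.+1}) : ord_max \in b -> add_max (drop_max b) = b.
Proof.
move=> b_max; apply/setP => y; case: (unliftP ord_max y) => [j ->|->].
  by rewrite mem_lift_add_max inE.
by rewrite setU11 b_max.
Qed.

Lemma card_add_max (T : {set 'I_n}) : #|add_max T| = #|T|.+1.
Proof.
have max_notin : ord_max \notin lift ord_max @: T.
  by apply/imsetP => -[i _ /eqP]; rewrite (negPf (neq_lift _ _)).
by rewrite cardsU1 max_notin card_imset //; apply: lift_inj.
Qed.

Lemma add_max_subset (T : {set 'I_n}) (b : {set 'I_n.+1}) :
  (add_max T \subset b) = (ord_max \in b) && (T \subset drop_max b).
Proof. by rewrite subUset sub1set sub_imset_pre. Qed.

Lemma derived_steiner t k (B : {set {set 'I_n.+1}}) :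
  steiner_system t.+1 k.+1 B -> steiner_system t k (derived B).
Proof.
case=> cardB uniqB; split=> [T | T cardT].
  by rewrite inE => /cardB; rewrite card_add_max => -[].
have := uniqB (add_max T); rewrite card_add_max cardT => /(_ erefl) <-.
have -> : [set b in B | add_max T \subset b]
          = add_max @: [set T' in derived B | T \subset T'].
  apply/setP => b; rewrite inE; apply/andP/imsetP => [[bB] | [T' + ->]].
    rewrite add_max_subset => /andP[b_max sTb].
    by exists (drop_max b); rewrite ?inE ?drop_maxK ?bB.
  by rewrite !inE => /andP[T'B sTT']; rewrite T'B setUS ?imsetS.
by rewrite card_imset //; apply: can_inj add_maxK.
Qed.

Lemma derived_large_set t k mu (L : seq {set {set 'I_n.+1}}) :
  large_set_mult t.+1 k.+1 mu L -> large_set_mult t k mu (map derived L).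
Proof.
case=> steinerL countL; split=> [_ /mapP[B BL ->] | K cardK].
  exact/derived_steiner/steinerL.
rewrite count_map -(countL (add_max K)) ?card_add_max ?cardK //.
by apply: eq_count => B; rewrite /= inE.
Qed.

End DerivedDesign.

(* Subsets of 'I_n are encoded by their characteristic bit lists, on which the
   checks below evaluate: finset operations are locked and do not compute. *)
Definition set_of_mask n (m : seq bool) : {set 'I_n} := [set i : 'I_n | nth false m i].
Definition mask_of_set n (A : {set 'I_n}) : seq bool := [seq i \in A | i <- enum 'I_n].

Fixpoint masks n : seq (seq bool) :=
  if n is n'.+1 then [seq b :: m | b <- [:: true; false], m <- masks n'] else [:: [::]].

Definition submask (m1 m2 : seq bool) : bool := all2 implb m1 m2.

Definition design_of_masks n (S : seq (seq bool)) : {set {set 'I_n}} :=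
  [set:: map (set_of_mask n) S].

Definition steiner_masks t k n (S : seq (seq bool)) : bool :=
  [&& uniq S, all (fun b => (size b == n) && (count id b == k)) S &
      all (fun T => (count id T == t) ==> (count (submask T) S == 1)) (masks n)].

Definition large_set_masks t k n mu (L : seq (seq (seq bool))) : bool :=
  all (steiner_masks t k n) L &&
  all (fun K => (count id K == k) ==> (count (fun S => K \in S) L == mu)) (masks n).

Lemma card_set_seq_count (T : finType) (s : seq T) (P : pred T) :
  uniq s -> #|[set x in [set:: s] | P x]| = count P s.
Proof.
move=> uniq_s; rewrite -size_filter -(card_uniqP (filter_uniq P uniq_s)).
by apply: eq_card => x; rewrite !inE mem_filter andbC.
Qed.

Section Masks.
Variable n : nat.
Implicit Types (A B : {set 'I_n}) (m : seq bool).

Lemma mem_masks m : size m = n -> m \in masks n.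
Proof.
elim: n m => [|n' IHn] [|b m] // [/IHn m_in].
by apply/allpairsP; exists (b, m); case: b.
Qed.

Lemma size_mask_of_set A : size (mask_of_set A) = n.
Proof. by rewrite size_map size_enum_ord. Qed.

Lemma mask_of_setK : cancel (@mask_of_set n) (set_of_mask n).
Proof.
move=> A; apply/setP => i; rewrite inE (nth_map i) ?size_enum_ord //.
by rewrite nth_ord_enum.
Qed.

Lemma set_of_maskK m : size m = n -> mask_of_set (set_of_mask n m) = m.
Proof.
move=> size_m; apply: (@eq_from_nth _ false); rewrite size_mask_of_set // => i lt_in.
by rewrite (nth_map (Ordinal lt_in)) ?size_enum_ord // inE nth_enum_ord.
Qed.

Lemma count_mask_of_set A : count id (mask_of_set A) = #|A|.
Proof. by rewrite count_map enumT cardE /enum_mem size_filter. Qed.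

Lemma submask_of_set A B : submask (mask_of_set A) (mask_of_set B) = (A \subset B).
Proof.
rewrite /submask /mask_of_set; apply/idP/subsetP => [sAB i Ai | sAB].
  have /allP/(_ i (mem_enum _ i)) : all (fun i => (i \in A) ==> (i \in B)) (enum 'I_n).
    by elim: (enum 'I_n) sAB => //= j s IHs /andP[-> /IHs].
  by rewrite Ai.
by elim: (enum 'I_n) => //= j s ->; rewrite andbT; apply/implyP/sAB.
Qed.

Lemma mem_design_of_masks S A :
  {in S, forall b, size b = n} -> (A \in design_of_masks n S) = (mask_of_set A \in S).
Proof.
move=> size_S; rewrite inE; apply/mapP/idP => [[b bS ->] | AS].
  by rewrite set_of_maskK ?size_S.
by exists (mask_of_set A); rewrite ?mask_of_setK.
Qed.

Lemma steiner_masks_size t k S : steiner_masks t k n S -> {in S, forall b, size b = n}.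
Proof. by case/and3P => _ /allP blocks_S _ b /blocks_S /andP[/eqP]. Qed.

Lemma steiner_masksP t k S :
  steiner_masks t k n S -> steiner_system t k (design_of_masks n S).
Proof.
move=> steiner_S; have size_S := steiner_masks_size steiner_S.
case/and3P: steiner_S => uniq_S /allP blocks_S /allP cover_S; split=> [A | T cardT].
  rewrite mem_design_of_masks // => /blocks_S /andP[_ /eqP].
  by rewrite count_mask_of_set.
have uniq_design : uniq (map (set_of_mask n) S).
  rewrite map_inj_in_uniq // => b1 b2 /size_S size_b1 /size_S size_b2.
  by move/(congr1 (@mask_of_set n)); rewrite !set_of_maskK.
have := cover_S _ (mem_masks (size_mask_of_set T)).
rewrite count_mask_of_set cardT eqxx => /eqP <-.
rewrite card_set_seq_count // count_map; apply: eq_in_count => b /size_S size_b /=.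
by rewrite -submask_of_set set_of_maskK.
Qed.

Lemma large_set_masksP t k mu L :
  large_set_masks t k n mu L -> large_set_mult t k mu (map (design_of_masks n) L).
Proof.
case/andP => /allP steiner_L /allP count_L; split=> [_ /mapP[S SL ->] | K cardK].
  exact/steiner_masksP/steiner_L.
have := count_L _ (mem_masks (size_mask_of_set K)).
rewrite count_mask_of_set cardK eqxx => /eqP <-; rewrite count_map.
apply: eq_in_count => S /steiner_L/steiner_masks_size size_S /=.
by rewrite mem_design_of_masks.
Qed.

End Masks.

Definition inv11 (x : nat) : nat := find (fun y => x * y == 1 %[mod 11]) (iota 0 11).

Definition pairs11 : seq (nat * nat) := [seq (a, b) | a <- iota 0 11, b <- iota 0 11].

Definition sl2_11 : seq ((nat * nat) * (nat * nat)) :=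
  [seq M <- [seq (r1, r2) | r1 <- pairs11, r2 <- pairs11]
     | M.1.1 * M.2.2 == M.1.2 * M.2.1 + 1 %[mod 11]].

(* The points 0, ..., 10 are the elements of F_11 and 11 is the point at infinity. *)
Definition mobius (M : (nat * nat) * (nat * nat)) (x : nat) : nat :=
  let: ((a, b), (c, d)) := M in
  if x == 11 then (if c == 0 then 11 else a * inv11 c %% 11)
  else let den := (c * x + d) %% 11 in
       if den == 0 then 11 else (a * x + b) * inv11 den %% 11.

Definition witt_blocks : seq (seq nat) :=
  undup [seq sort leq (map (mobius M) [:: 11; 1; 3; 4; 5; 9]) | M <- sl2_11].

Definition witt_relabellings : seq (seq nat) := [::
  [:: 0; 1; 2; 3; 4; 5; 6; 7; 8; 9; 10; 11];
  [:: 0; 1; 2; 3; 4; 7; 9; 11; 10; 6; 5; 8];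
  [:: 0; 1; 2; 3; 4; 7; 9; 11; 10; 6; 5; 8];
  [:: 0; 1; 2; 3; 4; 11; 10; 9; 6; 8; 5; 7];
  [:: 0; 1; 2; 3; 4; 6; 9; 5; 8; 11; 10; 7];
  [:: 0; 1; 2; 3; 4; 11; 6; 8; 10; 7; 9; 5];
  [:: 0; 1; 2; 3; 4; 6; 7; 11; 9; 5; 8; 10];
  [:: 0; 1; 2; 3; 4; 6; 5; 8; 10; 11; 7; 9];
  [:: 0; 1; 2; 3; 4; 8; 6; 9; 7; 10; 5; 11];
  [:: 0; 1; 2; 3; 4; 5; 7; 10; 6; 9; 11; 8];
  [:: 0; 1; 2; 3; 4; 11; 9; 5; 6; 7; 8; 10];
  [:: 0; 1; 2; 3; 4; 6; 10; 11; 7; 8; 9; 5];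
  [:: 0; 1; 2; 3; 4; 8; 5; 7; 6; 10; 11; 9];
  [:: 0; 1; 2; 3; 4; 11; 6; 10; 9; 5; 7; 8]].

Definition mask_of_seq n (s : seq nat) : seq bool := [seq i \in s | i <- iota 0 n].

Definition witt_large_set : seq (seq (seq bool)) :=
  [seq [seq mask_of_seq 12 (map (nth 0 p) b) | b <- witt_blocks] | p <- witt_relabellings].

Lemma witt_large_set_masks : large_set_masks 5 6 12 2 witt_large_set.
Proof. by vm_compute. Qed.

Theorem lemma15 :
  (exists L : seq {set {set 'I_11}}, large_set_mult 4 5 2 L) /\
  (exists L : seq {set {set 'I_10}}, large_set_mult 3 4 2 L) /\
  (exists L : seq {set {set 'I_12}}, large_set_mult 5 6 2 L).
Proof.
have LS12 := large_set_masksP witt_large_set_masks.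
split; [|split]; last by eexists; exact: LS12.
  by eexists; exact: derived_large_set LS12.
by eexists; do 2 apply: derived_large_set; exact: LS12.
Qed.
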